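(* For every acute triangle $ABC$ with $a<b<c$, letting $t_n$ denote the signed distance from $\mathrm{Atrace}(X_n)$ to $C$, we have $$t_{20}>t_{22}>t_3>t_8>t_9>t_{21}>t_{10}>t_2>t_1>t_{17}>t_{12}>t_7>t_{13}>t_{29}>t_4>t_{27}>t_{19}>t_{28}>t_{25}>t_{24}>t_{23}.$$ Equivalently, in the trace order, $X_{20}\prec X_{22}\prec X_3\prec X_8\prec X_9\prec X_{21}\prec X_{10}\prec X_2\prec X_1\prec X_{17}\prec X_{12}\prec X_7\prec X_{13}\prec X_{29}\prec X_4\prec X_{27}\prec X_{19}\prec X_{28}\prec X_{25}\prec X_{24}\prec X_{23}$.
   Context: $X_n$ denotes the $n$-th triangle center listed in Kimberling's Encyclopedia of Triangle Centers (ETC), given by barycentric coordinates in terms of $a=BC$, $b=CA$, $c=AB$. For a point $P\ne A$, $\mathrm{Atrace}(P)$ is the intersection of line $AP$ with line $BC$ (for $P=(p:q:r)$ it is $(0:q:r)$). For a point $X$ on line $BC$, the signed distance from $X$ to $C$ is the distance $XC$ if $X$ lies on the ray from $C$ through $B$, and $-XC$ if $X$ lies on the extension of $BC$ beyond $C$; for $P=(p:q:r)$ this equals $aq/(q+r)$. The trace order is defined by: $P\prec Q$ if the signed distance from $\mathrm{Atrace}(P)$ to $C$ is greater than that of $\mathrm{Atrace}(Q)$ in every acute triangle $ABC$ with $a<b<c$. *)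

(* Triangle centers of ETC given by barycentric coordinates
   as functions of the side lengths a = BC, b = CA, c = AB over a real closed
   field R (e.g. the real numbers). *)
From mathcomp Require Import all_boot all_order all_algebra.
Set Implicit Arguments. Unset Strict Implicit. Unset Printing Implicit Defensive.
Import Order.TTheory GRing.Theory Num.Theory.
Local Open Scope ring_scope.

Section Centers.
Variable R : rcfType.

(* homogeneous barycentric coordinates (p : q : r) *)
Record bary := Bary { bp : R; bq : R; br : R }.

Definition cyclic_pt (f : R -> R -> R -> R) (a b c : R) : bary :=
  Bary (f a b c) (f b c a) (f c a b).

(* S = twice the area of ABC (Conway notation), via Heron's formula *)
Definition S2 (a b c : R) : R :=
  Num.sqrt (2 * a^+2 * b^+2 + 2 * b^+2 * c^+2 + 2 * c^+2 * a^+2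
            - a^+4 - b^+4 - c^+4) / 2.
Definition SA (a b c : R) : R := (b^+2 + c^+2 - a^+2) / 2.
Definition cosA (a b c : R) : R := (b^+2 + c^+2 - a^+2) / (2 * b * c).
(* cos B + cos C, seen from vertex A *)
Definition cosBC (a b c : R) : R := cosA b c a + cosA c a b.

Definition X1 := cyclic_pt (fun a b c => a).
Definition X2 := cyclic_pt (fun a b c => 1).
Definition X3 := cyclic_pt (fun a b c => a^+2 * (b^+2 + c^+2 - a^+2)).
Definition X4 := cyclic_pt (fun a b c => (SA a b c)^-1).
Definition X7 := cyclic_pt (fun a b c => (b + c - a)^-1).
Definition X8 := cyclic_pt (fun a b c => b + c - a).
Definition X9 := cyclic_pt (fun a b c => a * (b + c - a)).
Definition X10 := cyclic_pt (fun a b c => b + c).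
Definition X12 := cyclic_pt (fun a b c => (b + c)^+2 / (b + c - a)).
(* trilinears csc(A + pi/3) *)
Definition X13 (a b c : R) :=
  cyclic_pt (fun a' b' c' => (Num.sqrt 3 * SA a' b' c' + S2 a b c)^-1) a b c.
(* trilinears csc(A + pi/6) *)
Definition X17 (a b c : R) :=
  cyclic_pt (fun a' b' c' => (SA a' b' c' + Num.sqrt 3 * S2 a b c)^-1) a b c.
(* trilinears tan A *)
Definition X19 := cyclic_pt (fun a b c => a / SA a b c).
Definition X20 := cyclic_pt (fun a b c =>
  3 * a^+4 - 2 * a^+2 * (b^+2 + c^+2) - (b^+2 - c^+2)^+2).
(* trilinears 1/(cos B + cos C) *)
Definition X21 := cyclic_pt (fun a b c => a / cosBC a b c).
Definition X22 := cyclic_pt (fun a b c => a^+2 * (b^+4 + c^+4 - a^+4)).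
Definition X23 := cyclic_pt (fun a b c =>
  a^+2 * (b^+4 + c^+4 - a^+4 - b^+2 * c^+2)).
(* trilinears sec A cos 2A *)
Definition X24 := cyclic_pt (fun a b c =>
  a^+2 * (a^+4 + b^+4 + c^+4 - 2 * a^+2 * b^+2 - 2 * a^+2 * c^+2)
  / (b^+2 + c^+2 - a^+2)).
(* trilinears sin A tan A *)
Definition X25 := cyclic_pt (fun a b c => a^+2 / SA a b c).
(* trilinears sec A / (b + c) *)
Definition X27 := cyclic_pt (fun a b c => ((b + c) * SA a b c)^-1).
(* trilinears tan A / (b + c) *)
Definition X28 := cyclic_pt (fun a b c => a / ((b + c) * SA a b c)).
(* trilinears sec A / (cos B + cos C) *)
Definition X29 := cyclic_pt (fun a b c => (SA a b c * cosBC a b c)^-1).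

(* A-trace: intersection of AP with BC *)
Definition Atrace (P : bary) : bary := Bary 0 (bq P) (br P).

(* signed distance to C of a point X = (0 : q : r) on line BC *)
Definition sdistC (a : R) (X : bary) : R := a * bq X / (bq X + br X).

Definition tdist (a : R) (P : bary) : R := sdistC a (Atrace P).

End Centers.

From mathcomp Require Import all_boot all_order all_algebra.
From mathcomp Require Import ring lra.
Import Order.TTheory GRing.Theory Num.Theory.
Local Open Scope ring_scope.

(** The A-trace of [P = (p : q : r)] is [(0 : q : r)], at signed distance
    [a q / (q + r)] from [C].  Hence, when both coordinate sums are positive,
    [t_P > t_Q] holds iff the cross product [q_P r_Q - q_Q r_P] is positive.  For each
    consecutive pair of the chain this cross product factors as [(c - b)]
    times a quantity that is positive in an acute triangle with [a < b < c]:
    mostly a product of obviously positive factors, otherwise an elementary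
    polynomial inequality ([A < 60°], Schur's inequality, ...).  The centers
    [X13] and [X17] involve [sqrt 3 * S]; those comparisons are settled by
    squaring.  The two hardest polynomial inequalities are certified after the
    substitution [a = w + u], [b = w + u + v], [c = w + 2u + v], under which
    acuteness at [C] reads [2u(u + v) < w^2]. *)

Create HintDb triangle.

Ltac pos_leaf :=
  first
  [ done
  | by rewrite ltr0n
  | solve [auto with nocore triangle]
  (* [lra] ignores section hypotheses; reverting them makes them visible. *)
  | repeat match goal with H : is_true (_ < _) |- _ => revert H end;
    move=> *; lra ].

Ltac pos :=
  lazymatch goal with
  | |- is_true (0 < _ - _) => pos_leaf
  | |- is_true (0 < _ + _) => first [apply: addr_gt0; pos | pos_leaf]
  | |- is_true (0 < _ ^-1) => rewrite invr_gt0; pos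
  | |- is_true (0 < _ * _) => first [apply: mulr_gt0; pos | pos_leaf]
  | |- is_true (0 < _ ^+ _) => apply: exprn_gt0; pos
  | |- is_true (0 < Num.sqrt _) => rewrite sqrtr_gt0; pos
  | |- is_true (0 < _) => pos_leaf
  end.

Ltac pos_as F :=
  match goal with |- is_true (0 < ?X) => have -> : X = F by first [ring | field] end;
  pos.

Ltac nonzero := repeat (apply/andP; split); first [done | apply: lt0r_neq0; pos].

Lemma schur_gt0 (R : realFieldType) (x y z : R) : 0 < x -> x < y -> y < z ->
  0 < x * (x - y) * (x - z) + y * (y - x) * (y - z) + z * (z - x) * (z - y).
Proof. by move=> *; pos_as (x * (y - x) * (z - x) + (z - y) ^+ 2 * (z + y - x)). Qed.

Section SignedDistance.
Variable R : rcfType.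

Lemma tdist_oppr (a x q r : R) : tdist a (Bary x (- q) (- r)) = tdist a (Bary x q r).
Proof. by rewrite /tdist /sdistC /= -opprD mulrN invrN mulrN mulNr opprK. Qed.

Lemma tdist_lt (a : R) (P Q : bary R) :
  0 < a -> 0 < bq P + br P -> 0 < bq Q + br Q ->
  0 < bq P * br Q - bq Q * br P -> tdist a Q < tdist a P.
Proof.
move=> ha hP hQ hPQ; rewrite /tdist /sdistC /= -subr_gt0.
have -> : a * bq P / (bq P + br P) - a * bq Q / (bq Q + br Q) =
  a * (bq P * br Q - bq Q * br P) / ((bq P + br P) * (bq Q + br Q)).
  by field; rewrite !lt0r_neq0.
by pos.
Qed.

End SignedDistance.

Ltac tdist_lt_as F := apply: tdist_lt => /=; [done | pos | pos | pos_as F].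

Section ScaleneTriangle.
Variables (R : rcfType) (a b c : R).
Hypotheses (ha : 0 < a) (hab : a < b) (hbc : b < c) (htri : c < a + b).

(* Twice Conway's [S_A, S_B, S_C]: [sA = 2 b c cos A], etc. *)
Local Notation sA := (b ^+ 2 + c ^+ 2 - a ^+ 2).
Local Notation sB := (c ^+ 2 + a ^+ 2 - b ^+ 2).
Local Notation sC := (a ^+ 2 + b ^+ 2 - c ^+ 2).

Lemma sA_gt0 : 0 < sA.
Proof. by pos_as ((b - a) * (b + a) + c ^+ 2). Qed.

Lemma sB_gt0 : 0 < sB.
Proof. by pos_as ((c - b) * (c + b) + a ^+ 2). Qed.

Lemma S2_gt0 : 0 < S2 a b c.
Proof.
apply: divr_gt0; rewrite ?sqrtr_gt0 //.
by pos_as ((a + b + c) * (b + c - a) * (c + a - b) * (a + b - c)).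
Qed.

#[local] Hint Resolve sA_gt0 sB_gt0 S2_gt0 : triangle.

Lemma S2_sqr :
  S2 a b c ^+ 2 = (a + b + c) * (b + c - a) * (c + a - b) * (a + b - c) / 4.
Proof.
rewrite /S2 expr_div_n sqr_sqrtr; first by field.
by apply: ltW; pos_as ((a + b + c) * (b + c - a) * (c + a - b) * (a + b - c)).
Qed.

Lemma angleA_lt60 : a ^+ 2 < b ^+ 2 - b * c + c ^+ 2.
Proof. by rewrite -subr_gt0; pos_as ((b - a) * (b + a) + c * (c - b)). Qed.

Lemma sqrt3S2_lt : Num.sqrt 3 * S2 a b c < ((b + c) ^+ 2 - a ^+ 2) / 2.
Proof.
have hA := angleA_lt60.
move: (S2 a b c) S2_gt0 S2_sqr => S hS hS2.
rewrite -ltr_sqr ?nnegrE;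
  [| by apply: ltW; pos | by apply: ltW; pos_as ((b + c - a) * (a + b + c) / 2)].
rewrite -subr_gt0 !exprMn hS2 sqr_sqrtr ?ler0n //.
by pos_as ((b + c - a) * (a + b + c) * (b ^+ 2 - b * c + c ^+ 2 - a ^+ 2)).
Qed.

Lemma S2_lt_sqrt3 : 2 * S2 a b c < Num.sqrt 3 * a * (b + c - a).
Proof.
move: (S2 a b c) S2_gt0 S2_sqr => S hS hS2.
rewrite -ltr_sqr ?nnegrE; [|by apply: ltW; pos | by apply: ltW; pos].
rewrite -subr_gt0 !exprMn hS2 sqr_sqrtr ?ler0n //.
by pos_as ((b + c - a) * (3 * (b + c - a) * (c - b) ^+ 2
                          + 2 * (c + a - b) * (a + b - c) * (b + c - 2 * a))).
Qed.

Hypothesis hacute : c ^+ 2 < a ^+ 2 + b ^+ 2.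

Lemma acute_scalene_param : exists w u v : R,
  [/\ 0 < w, 0 < u, 0 < v & 2 * u * (u + v) < w ^+ 2]
  /\ [/\ a = w + u, b = w + u + v & c = w + 2 * u + v].
Proof.
exists (a + b - c), (c - b), (b - a); split; last by split; ring.
by split; [pos | pos | pos | rewrite -subr_gt0; pos_as (a ^+ 2 + b ^+ 2 - c ^+ 2)].
Qed.

(* After the substitution, [w ^+ 2 - 2 * u * (u + v)] is [a^2 + b^2 - c^2]; the
   certificates below are multiples of it plus polynomials with nonnegative
   coefficients. *)
Lemma sqrt3S2_gt_sqr :
  (a + b + c) * (a ^+ 2 * (b + c) + 2 * a * b * c - (b + c) * (b - c) ^+ 2) ^+ 2
  < 3 * ((b + c - a) * (c + a - b) * (a + b - c))
      * (a * (b + c) + b ^+ 2 + c ^+ 2) ^+ 2.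
Proof.
have [w [u [v [[hw hu hv hK] [ea eb ec]]]]] := acute_scalene_param.
rewrite -subr_gt0 ea eb ec.
pos_as ((w ^+ 2 - 2 * u * (u + v)) * 4 * u * (u + v) * (2 * u + v) ^+ 3
  + w * (208 * u ^+ 6 + 688 * u ^+ 5 * v + 932 * u ^+ 4 * v ^+ 2 + 648 * u ^+ 3 * v ^+ 3
           + 228 * u ^+ 2 * v ^+ 4 + 32 * u * v ^+ 5
         + w * (960 * u ^+ 5 + 2848 * u ^+ 4 * v + 3128 * u ^+ 3 * v ^+ 2
                  + 1556 * u ^+ 2 * v ^+ 3 + 324 * u * v ^+ 4 + 16 * v ^+ 5)
         + w ^+ 2 * (1348 * u ^+ 4 + 3584 * u ^+ 3 * v + 3104 * u ^+ 2 * v ^+ 2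
                       + 1024 * u * v ^+ 3 + 96 * v ^+ 4)
         + w ^+ 3 * (856 * u ^+ 3 + 2056 * u ^+ 2 * v + 1272 * u * v ^+ 2 + 208 * v ^+ 3)
         + w ^+ 4 * (264 * u ^+ 2 + 576 * u * v + 192 * v ^+ 2)
         + w ^+ 5 * (32 * u + 64 * v))).
Qed.

Lemma S2_gt_sqrt3_sqr :
  3 * (a + b + c) * sB ^+ 2 * sC ^+ 2
  < (b + c - a) * (c + a - b) * (a + b - c)
    * (- a ^+ 3 + a ^+ 2 * (b + c) + a * (b ^+ 2 + c ^+ 2) + 2 * a * b * c
       - (b + c) * (b - c) ^+ 2) ^+ 2.
Proof.
have [w [u [v [[hw hu hv hK] [ea eb ec]]]]] := acute_scalene_param.
rewrite -subr_gt0 ea eb ec.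
pos_as (4 * ((w ^+ 2 - 2 * u * (u + v))
          * (12 * u ^+ 3 * (u + v) * (2 * u + v) ^+ 3
             + w * u ^+ 3 * (232 * u ^+ 3 + 432 * u ^+ 2 * v + 226 * u * v ^+ 2 + 18 * v ^+ 3)
             + w ^+ 2 * u ^+ 4 * (16 * u + 800 * v))
  + w * (16 * u ^+ 4 * v ^+ 4 + 16 * u ^+ 3 * v ^+ 5
         + w * (1952 * u ^+ 6 * v + 2640 * u ^+ 5 * v ^+ 2 + 1020 * u ^+ 4 * v ^+ 3
                  + 372 * u ^+ 3 * v ^+ 4 + 40 * u ^+ 2 * v ^+ 5)
         + w ^+ 2 * (1280 * u ^+ 6 + 3804 * u ^+ 5 * v + 4278 * u ^+ 4 * v ^+ 2
                       + 2198 * u ^+ 3 * v ^+ 3 + 468 * u ^+ 2 * v ^+ 4 + 32 * u * v ^+ 5)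
         + w ^+ 3 * (2460 * u ^+ 5 + 4946 * u ^+ 4 * v + 4740 * u ^+ 3 * v ^+ 2
                       + 1700 * u ^+ 2 * v ^+ 3 + 240 * u * v ^+ 4 + 8 * v ^+ 5)
         + w ^+ 4 * (2075 * u ^+ 4 + 4054 * u ^+ 3 * v + 2574 * u ^+ 2 * v ^+ 2
                       + 628 * u * v ^+ 3 + 44 * v ^+ 4)
         + w ^+ 5 * (1040 * u ^+ 3 + 1656 * u ^+ 2 * v + 730 * u * v ^+ 2 + 90 * v ^+ 3)
         + w ^+ 6 * (316 * u ^+ 2 + 373 * u * v + 85 * v ^+ 2)
         + w ^+ 7 * (54 * u + 36 * v)
         + 4 * w ^+ 8))).
Qed.

Lemma sqrt3S2_gt :
  (a + b + c) * (a ^+ 2 * (b + c) + 2 * a * b * c - (b + c) * (b - c) ^+ 2)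
  < 2 * Num.sqrt 3 * S2 a b c * (a * (b + c) + b ^+ 2 + c ^+ 2).
Proof.
have hP := sqrt3S2_gt_sqr.
move: (S2 a b c) S2_gt0 S2_sqr => S hS hS2.
rewrite -ltr_sqr ?nnegrE; [| | by apply: ltW; pos]; last first.
  by apply: ltW; pos_as ((a + b + c) * ((b + c) * (c + a - b) * (a + b - c) + 2 * a * b * c)).
rewrite -subr_gt0 !exprMn hS2 sqr_sqrtr ?ler0n //.
by pos_as ((a + b + c)
  * (3 * ((b + c - a) * (c + a - b) * (a + b - c)) * (a * (b + c) + b ^+ 2 + c ^+ 2) ^+ 2
     - (a + b + c) * (a ^+ 2 * (b + c) + 2 * a * b * c - (b + c) * (b - c) ^+ 2) ^+ 2)).
Qed.

Lemma S2_gt_sqrt3 :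
  Num.sqrt 3 * (a + b + c) * sB * sC
  < 2 * S2 a b c * (- a ^+ 3 + a ^+ 2 * (b + c) + a * (b ^+ 2 + c ^+ 2) + 2 * a * b * c
                    - (b + c) * (b - c) ^+ 2).
Proof.
have hP := S2_gt_sqrt3_sqr.
move: (S2 a b c) S2_gt0 S2_sqr => S hS hS2.
have hW : 0 < - a ^+ 3 + a ^+ 2 * (b + c) + a * (b ^+ 2 + c ^+ 2) + 2 * a * b * c
              - (b + c) * (b - c) ^+ 2.
  by pos_as ((b + c) * (2 * a * b + (c - b) * (a + b - c)) + a ^+ 2 * (b + c - a)).
rewrite -ltr_sqr ?nnegrE; [| by apply: ltW; pos | by apply: ltW; pos].
rewrite -subr_gt0 !exprMn hS2 sqr_sqrtr ?ler0n //.
by pos_as ((a + b + c)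
  * ((b + c - a) * (c + a - b) * (a + b - c)
     * (- a ^+ 3 + a ^+ 2 * (b + c) + a * (b ^+ 2 + c ^+ 2) + 2 * a * b * c
        - (b + c) * (b - c) ^+ 2) ^+ 2
     - 3 * (a + b + c) * sB ^+ 2 * sC ^+ 2)).
Qed.

Lemma cos2B_lt0 : 0 < 2 * c ^+ 2 * a ^+ 2 - sB ^+ 2.
Proof. by pos_as (2 * a ^+ 2 * (b - a) * (b + a) + sB * sC). Qed.

Lemma cos2C_lt0 : 0 < 2 * a ^+ 2 * b ^+ 2 - sC ^+ 2.
Proof.
by pos_as (a ^+ 2 * b ^+ 2 + a ^+ 2 * (c - a) * (c + a) + sC * (c - b) * (c + b)).
Qed.

#[local] Hint Resolve cos2B_lt0 cos2C_lt0 : triangle.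

Lemma tdist_X20 : tdist a (X20 a b c) = tdist a (Bary 0
  (- (3 * b ^+ 4 - 2 * b ^+ 2 * (c ^+ 2 + a ^+ 2) - (c ^+ 2 - a ^+ 2) ^+ 2))
  (- (3 * c ^+ 4 - 2 * c ^+ 2 * (a ^+ 2 + b ^+ 2) - (a ^+ 2 - b ^+ 2) ^+ 2))).
Proof. by rewrite tdist_oppr. Qed.

Lemma tdist_X21 : tdist a (X21 a b c) =
  tdist a (Bary 0 (b * (a * sA + b * sB)) (c * (a * sA + c * sC))).
Proof. by rewrite /X21 /cosBC /cosA /cyclic_pt /tdist /sdistC /=; field; nonzero. Qed.

Lemma tdist_X17 : tdist a (X17 a b c) = tdist a (Bary 0
  (sC / 2 + Num.sqrt 3 * S2 a b c) (sB / 2 + Num.sqrt 3 * S2 a b c)).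
Proof. by rewrite /X17 /cyclic_pt /SA /tdist /sdistC /=; field; nonzero. Qed.

Lemma tdist_X12 : tdist a (X12 a b c) =
  tdist a (Bary 0 ((c + a) ^+ 2 * (a + b - c)) ((a + b) ^+ 2 * (c + a - b))).
Proof. by rewrite /X12 /cyclic_pt /tdist /sdistC /=; field; nonzero. Qed.

Lemma tdist_X7 : tdist a (X7 a b c) = tdist a (Bary 0 (a + b - c) (c + a - b)).
Proof. by rewrite /X7 /cyclic_pt /tdist /sdistC /=; field; nonzero. Qed.

Lemma tdist_X13 : tdist a (X13 a b c) = tdist a (Bary 0
  (Num.sqrt 3 * sC / 2 + S2 a b c) (Num.sqrt 3 * sB / 2 + S2 a b c)).
Proof. by rewrite /X13 /cyclic_pt /SA /tdist /sdistC /=; field; nonzero. Qed.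

Lemma tdist_X29 : tdist a (X29 a b c) =
  tdist a (Bary 0 (sC * (a * sA + b * sB)) (sB * (a * sA + c * sC))).
Proof. by rewrite /X29 /cosBC /cosA /SA /cyclic_pt /tdist /sdistC /=; field; nonzero. Qed.

Lemma tdist_X4 : tdist a (X4 a b c) = tdist a (Bary 0 sC sB).
Proof. by rewrite /X4 /cyclic_pt /SA /tdist /sdistC /=; field; nonzero. Qed.

Lemma tdist_X27 : tdist a (X27 a b c) = tdist a (Bary 0 ((a + b) * sC) ((c + a) * sB)).
Proof. by rewrite /X27 /cyclic_pt /SA /tdist /sdistC /=; field; nonzero. Qed.

Lemma tdist_X19 : tdist a (X19 a b c) = tdist a (Bary 0 (b * sC) (c * sB)).
Proof. by rewrite /X19 /cyclic_pt /SA /tdist /sdistC /=; field; nonzero. Qed.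

Lemma tdist_X28 : tdist a (X28 a b c) =
  tdist a (Bary 0 (b * (a + b) * sC) (c * (c + a) * sB)).
Proof. by rewrite /X28 /cyclic_pt /SA /tdist /sdistC /=; field; nonzero. Qed.

Lemma tdist_X25 : tdist a (X25 a b c) = tdist a (Bary 0 (b ^+ 2 * sC) (c ^+ 2 * sB)).
Proof. by rewrite /X25 /cyclic_pt /SA /tdist /sdistC /=; field; nonzero. Qed.

Lemma tdist_X24 : tdist a (X24 a b c) = tdist a (Bary 0
  (b ^+ 2 * (2 * c ^+ 2 * a ^+ 2 - sB ^+ 2) * sC)
  (c ^+ 2 * (2 * a ^+ 2 * b ^+ 2 - sC ^+ 2) * sB)).
Proof.
(* The raw coordinates of [X24] are both negative, since [cos 2B, cos 2C < 0]. *)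
have hsum : b ^+ 2 * (b ^+ 4 + c ^+ 4 + a ^+ 4 - 2 * b ^+ 2 * c ^+ 2 - 2 * b ^+ 2 * a ^+ 2) * sC
  + c ^+ 2 * (c ^+ 4 + a ^+ 4 + b ^+ 4 - 2 * c ^+ 2 * a ^+ 2 - 2 * c ^+ 2 * b ^+ 2) * sB != 0.
  rewrite -oppr_eq0 lt0r_neq0 //.
  by pos_as (b ^+ 2 * (2 * c ^+ 2 * a ^+ 2 - sB ^+ 2) * sC
             + c ^+ 2 * (2 * a ^+ 2 * b ^+ 2 - sC ^+ 2) * sB).
by rewrite /X24 /cyclic_pt /tdist /sdistC /=; field; nonzero.
Qed.

Lemma tdist_X23 : tdist a (X23 a b c) = tdist a (Bary 0
  (- (b ^+ 2 * (c ^+ 4 + a ^+ 4 - b ^+ 4 - c ^+ 2 * a ^+ 2)))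
  (- (c ^+ 2 * (a ^+ 4 + b ^+ 4 - c ^+ 4 - a ^+ 2 * b ^+ 2)))).
Proof. by rewrite tdist_oppr. Qed.

Lemma tdist_X22_lt_X20 : tdist a (X22 a b c) < tdist a (X20 a b c).
Proof.
rewrite tdist_X20; apply: tdist_lt => /=; [done | pos_as (2 * sB * sC)
  | pos_as (sB * sC * (b ^+ 2 + c ^+ 2))
  | pos_as ((c - b) * (b + c) * sA ^+ 2 * sB * sC)].
Qed.

Lemma tdist_X3_lt_X22 : tdist a (X3 a b c) < tdist a (X22 a b c).
Proof.
apply: tdist_lt => /=; [done | pos_as (sB * sC * (b ^+ 2 + c ^+ 2)) | pos
  | pos_as (2 * (c - b) * a ^+ 2 * b ^+ 2 * c ^+ 2 * (b + c) * sA)].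
Qed.

Lemma tdist_X8_lt_X3 : tdist a (X8 a b c) < tdist a (X3 a b c).
Proof.
by tdist_lt_as ((c - b) * (a + b + c)
  * (a * ((b + c - a) * (b - a) + (c + a - b) * (c - a)) + (b + c - a) * (c - b) ^+ 2)).
Qed.

Lemma tdist_X9_lt_X8 : tdist a (X9 a b c) < tdist a (X8 a b c).
Proof. by tdist_lt_as ((c - b) * (a + b - c) * (c + a - b)). Qed.

Lemma tdist_X21_lt_X9 : tdist a (X21 a b c) < tdist a (X9 a b c).
Proof.
rewrite tdist_X21.
by tdist_lt_as ((c - b) * b * c * (a + b - c) * (b + c - a) * (c + a - b)).
Qed.

Lemma tdist_X10_lt_X21 : tdist a (X10 a b c) < tdist a (X21 a b c).
Proof.
rewrite tdist_X21; have hA := angleA_lt60.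
by tdist_lt_as ((c - b) * (b + c - a) * (a + b + c) * (b ^+ 2 - b * c + c ^+ 2 - a ^+ 2)).
Qed.

Lemma tdist_X2_lt_X10 : tdist a (X2 a b c) < tdist a (X10 a b c).
Proof. by tdist_lt_as (c - b). Qed.

Lemma tdist_X1_lt_X2 : tdist a (X1 a b c) < tdist a (X2 a b c).
Proof. by tdist_lt_as (c - b). Qed.

Lemma tdist_X17_lt_X1 : tdist a (X17 a b c) < tdist a (X1 a b c).
Proof.
rewrite tdist_X17; have hS := sqrt3S2_lt.
by tdist_lt_as ((c - b) * (((b + c) ^+ 2 - a ^+ 2) / 2 - Num.sqrt 3 * S2 a b c)).
Qed.

Lemma tdist_X12_lt_X17 : tdist a (X12 a b c) < tdist a (X17 a b c).
Proof.
rewrite tdist_X17 tdist_X12; have hS := sqrt3S2_gt.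
by tdist_lt_as ((c - b)
  * (2 * Num.sqrt 3 * S2 a b c * (a * (b + c) + b ^+ 2 + c ^+ 2)
     - (a + b + c) * (a ^+ 2 * (b + c) + 2 * a * b * c - (b + c) * (b - c) ^+ 2)) / 2).
Qed.

Lemma tdist_X7_lt_X12 : tdist a (X7 a b c) < tdist a (X12 a b c).
Proof.
rewrite tdist_X12 tdist_X7.
by tdist_lt_as ((c - b) * (a + b - c) * (c + a - b) * (2 * a + b + c)).
Qed.

Lemma tdist_X13_lt_X7 : tdist a (X13 a b c) < tdist a (X7 a b c).
Proof.
rewrite tdist_X7 tdist_X13; have hS := S2_lt_sqrt3.
by tdist_lt_as ((c - b) * (Num.sqrt 3 * a * (b + c - a) - 2 * S2 a b c)).
Qed.

Lemma tdist_X29_lt_X13 : tdist a (X29 a b c) < tdist a (X13 a b c).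
Proof.
rewrite tdist_X13 tdist_X29; have hS := S2_gt_sqrt3.
by tdist_lt_as ((c - b) * (b + c - a)
  * (2 * S2 a b c * (- a ^+ 3 + a ^+ 2 * (b + c) + a * (b ^+ 2 + c ^+ 2)
                     + 2 * a * b * c - (b + c) * (b - c) ^+ 2)
     - Num.sqrt 3 * (a + b + c) * sB * sC) / 2).
Qed.

Lemma tdist_X4_lt_X29 : tdist a (X4 a b c) < tdist a (X29 a b c).
Proof.
rewrite tdist_X29 tdist_X4.
by tdist_lt_as ((c - b) * (b + c - a) * (a + b + c) * sB * sC).
Qed.

Lemma tdist_X27_lt_X4 : tdist a (X27 a b c) < tdist a (X4 a b c).
Proof. by rewrite tdist_X4 tdist_X27; tdist_lt_as ((c - b) * sB * sC). Qed.

Lemma tdist_X19_lt_X27 : tdist a (X19 a b c) < tdist a (X27 a b c).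
Proof. by rewrite tdist_X27 tdist_X19; tdist_lt_as ((c - b) * a * sB * sC). Qed.

Lemma tdist_X28_lt_X19 : tdist a (X28 a b c) < tdist a (X19 a b c).
Proof. by rewrite tdist_X19 tdist_X28; tdist_lt_as ((c - b) * b * c * sB * sC). Qed.

Lemma tdist_X25_lt_X28 : tdist a (X25 a b c) < tdist a (X28 a b c).
Proof. by rewrite tdist_X28 tdist_X25; tdist_lt_as ((c - b) * a * b * c * sB * sC). Qed.

Lemma tdist_X24_lt_X25 : tdist a (X24 a b c) < tdist a (X25 a b c).
Proof.
rewrite tdist_X25 tdist_X24.
by tdist_lt_as (2 * (c - b) * a ^+ 2 * b ^+ 2 * c ^+ 2 * (b + c) * sB * sC).
Qed.

Lemma tdist_X23_lt_X24 : tdist a (X23 a b c) < tdist a (X24 a b c).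
Proof.
have hab2 : a ^+ 2 < b ^+ 2 by rewrite ltrXn2r // ltW.
have hbc2 : b ^+ 2 < c ^+ 2 by rewrite ltrXn2r // ltW // (lt_trans ha hab).
have hschur := @schur_gt0 R _ _ _ (exprn_gt0 2 ha) hab2 hbc2.
rewrite tdist_X24 tdist_X23; apply: tdist_lt => /=; [done | pos
  | pos_as ((b ^+ 2 + c ^+ 2) * (c ^+ 2 - b ^+ 2) ^+ 2 + a ^+ 2 * b ^+ 2 * (c ^+ 2 - b ^+ 2)
            + a ^+ 2 * (b ^+ 2 - a ^+ 2) * (b ^+ 2 + c ^+ 2))
  | pos_as ((c - b) * a ^+ 2 * b ^+ 2 * c ^+ 2 * (b + c)
            * (a ^+ 2 * (a ^+ 2 - b ^+ 2) * (a ^+ 2 - c ^+ 2)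
               + b ^+ 2 * (b ^+ 2 - a ^+ 2) * (b ^+ 2 - c ^+ 2)
               + c ^+ 2 * (c ^+ 2 - a ^+ 2) * (c ^+ 2 - b ^+ 2)
               + 3 * a ^+ 2 * b ^+ 2 * c ^+ 2))].
Qed.

End ScaleneTriangle.

Theorem theorem6p4 (R : rcfType) (a b c : R)
  (ha : 0 < a) (hab : a < b) (hbc : b < c) (htri : c < a + b)
  (hacA : a^+2 < b^+2 + c^+2) (hacB : b^+2 < c^+2 + a^+2)
  (hacC : c^+2 < a^+2 + b^+2) :
  let t := tdist a in
  t (X20 a b c) > t (X22 a b c) /\ t (X22 a b c) > t (X3 a b c) /\
      t (X3 a b c) > t (X8 a b c) /\ t (X8 a b c) > t (X9 a b c) /\
      t (X9 a b c) > t (X21 a b c) /\ t (X21 a b c) > t (X10 a b c) /\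
      t (X10 a b c) > t (X2 a b c) /\ t (X2 a b c) > t (X1 a b c) /\
      t (X1 a b c) > t (X17 a b c) /\ t (X17 a b c) > t (X12 a b c) /\
      t (X12 a b c) > t (X7 a b c) /\ t (X7 a b c) > t (X13 a b c) /\
      t (X13 a b c) > t (X29 a b c) /\ t (X29 a b c) > t (X4 a b c) /\
      t (X4 a b c) > t (X27 a b c) /\ t (X27 a b c) > t (X19 a b c) /\
      t (X19 a b c) > t (X28 a b c) /\ t (X28 a b c) > t (X25 a b c) /\
      t (X25 a b c) > t (X24 a b c) /\
      t (X24 a b c) > t (X23 a b c).
Proof.
move=> t; rewrite {}/t.
by repeat split;
  [ apply: tdist_X22_lt_X20
  | apply: tdist_X3_lt_X22
  | apply: tdist_X8_lt_X3
  | apply: tdist_X9_lt_X8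
  | apply: tdist_X21_lt_X9
  | apply: tdist_X10_lt_X21
  | apply: tdist_X2_lt_X10
  | apply: tdist_X1_lt_X2
  | apply: tdist_X17_lt_X1
  | apply: tdist_X12_lt_X17
  | apply: tdist_X7_lt_X12
  | apply: tdist_X13_lt_X7
  | apply: tdist_X29_lt_X13
  | apply: tdist_X4_lt_X29
  | apply: tdist_X27_lt_X4
  | apply: tdist_X19_lt_X27
  | apply: tdist_X28_lt_X19
  | apply: tdist_X25_lt_X28
  | apply: tdist_X24_lt_X25
  | apply: tdist_X23_lt_X24 ].
Qed.
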